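(* Let $k$ be a positive integer and let $p$ be the smallest positive integer such that $k<\kappa_p$ (in dimension $d=2$). If $p$ is a multiple of $4$ and $k-\kappa_{p-1}$ is an odd multiple of $p/2$, then $\delta_z(2,k)\neq\lfloor\lambda(2,k)\rfloor$.
   Context: A point of $\mathbb{Z}^2$ is primitive if its coordinates are relatively prime; $\mathbb{P}^2_\circ$ denotes the set of primitive points of $\mathbb{Z}^2$ whose first non-zero coordinate is positive. For a finite $\mathcal{X}\subset\mathbb{R}^2$, $\kappa(\mathcal{X})=\max_{i\in\{1,2\}}\sum_{x\in\mathcal{X}}|x_i|$, and $\delta_z(2,k)=\max\{|\mathcal{X}|:\mathcal{X}\subset\mathbb{P}^2_\circ,\ \kappa(\mathcal{X})\le k\}$. $B(2,p)=\{x\in\mathbb{R}^2:\|x\|_1\le p\}$; $N_p=|B(2,p)\cap\mathbb{P}^2_\circ|$ and $\kappa_p=\kappa(B(2,p)\cap\mathbb{P}^2_\circ)$ (with $N_0=\kappa_0=0$). With $p$ as in the claim, $\lambda(2,k)=N_{p-1}+\frac{2(k-\kappa_{p-1})}{p}$. *)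

From mathcomp Require Import all_boot all_order all_algebra.
From mathcomp Require Import boolp.
Set Implicit Arguments. Unset Strict Implicit. Unset Printing Implicit Defensive.
Import Order.TTheory GRing.Theory Num.Theory.

Definition pt := (int * int)%type.

Definition inP2 (x : pt) : bool :=
  (gcdz x.1 x.2 == 1%N) && ((0 < x.1)%R || ((x.1 == 0) && (0 < x.2)%R)).

(* kappa(X) = max_i sum_{x in X} |x_i|  (a finite set X given as a
   duplicate-free list). *)
Definition kappa (X : seq pt) : nat :=
  maxn (\sum_(x <- X) `|x.1|%N) (\sum_(x <- X) `|x.2|%N).

Definition admissible (k : nat) (X : seq pt) : bool :=
  uniq X && all inP2 X && (kappa X <= k).

Definition has_adm (k n : nat) : bool :=
  `[< exists X : seq pt, admissible k X /\ size X = n >].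

Lemma has_adm0 k : exists n, has_adm k n.
Proof. exists 0%N; apply/asboolP; exists [::]; split => //; by rewrite /admissible /kappa !big_nil. Qed.

Lemma inP2_norm (x : pt) : inP2 x -> (0 < `|x.1|%N + `|x.2|%N)%N.
Proof.
case: x => a b /andP [/eqP g _] /=.
rewrite addn_gt0 !absz_gt0.
case: (eqVneq a 0) => [a0|//]; case: (eqVneq b 0) => [b0|//].
by move: g; rewrite a0 b0.
Qed.

Lemma admissible_size k X : admissible k X -> (size X <= 2 * k)%N.
Proof.
case/andP => /andP [_ hP] hk.
have -> : size X = \sum_(x <- X) 1%N by rewrite sum1_size.
apply: (@leq_trans (\sum_(x <- X) (`|x.1|%N + `|x.2|%N))).
  rewrite big_seq [X in (_ <= X)%N]big_seq; apply: leq_sum => x xX.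
  by apply: inP2_norm; move/allP: hP; apply.
rewrite big_split /=; move: hk; rewrite /kappa geq_max => /andP [h1 h2].
by rewrite mul2n -addnn leq_add.
Qed.

Lemma has_adm_bound k n : has_adm k n -> (n <= 2 * k)%N.
Proof. by move/asboolP => [X [hX <-]]; apply: admissible_size hX. Qed.

Definition delta_z2 (k : nat) : nat :=
  ex_maxn (has_adm0 k) (@has_adm_bound k).

Definition coords (p : nat) : seq int := [seq (i%:Z - p%:Z)%R | i <- iota 0 (2 * p).+1].
Definition ballP (p : nat) : seq pt :=
  [seq x <- [seq (a, b) | a <- coords p, b <- coords p]
     | inP2 x && (`|x.1|%N + `|x.2|%N <= p)%N].

Definition Np (p : nat) : nat := size (ballP p).
Definition kappap (p : nat) : nat := kappa (ballP p).

Definition lambda2 (k p : nat) : rat :=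
  ((Np p.-1)%:R + 2%:R * ((k%:Z - (kappap p.-1)%:Z)%:~R) / p%:R)%R.

(* Let t be the primitive points of the l1-ball of radius p - 1. The symmetry
   (a, b) |-> (b, a) shows that both coordinate sums over t equal kappa_{p-1}, and
   lambda(2,k) = N_{p-1} + m is an integer. An admissible X with at least
   N_{p-1} + m points has total l1-weight at most 2k = weight(t) + p m. Points
   outside t weigh at least p and points of t less than p, so X must contain t
   together with exactly m points of norm p, and its first coordinates must sum
   to k. The first coordinates of these m new points then sum to m p/2, which is
   even because 4 | p; but a primitive point of even norm has both coordinates
   odd, so that sum has the parity of m, which is odd. *)

From mathcomp Require Import all_boot all_order all_algebra zify ring.
From mathcomp Require Import boolp.
Import Order.TTheory GRing.Theory Num.Theory.
Set Implicit Arguments. Unset Strict Implicit.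

Section Exchange.

Variable T : eqType.
Implicit Types (s t : seq T) (P : pred T) (F : T -> nat).

Lemma big_mem_swap s t F : uniq s -> uniq t ->
  (\sum_(x <- s | x \in t) F x = \sum_(x <- t | x \in s) F x)%N.
Proof.
move=> us ut; rewrite -big_filter -[RHS]big_filter; apply: perm_big.
by apply: uniq_perm; rewrite ?filter_uniq // => x; rewrite !mem_filter andbC.
Qed.

Lemma big_exchange s t F : uniq s -> uniq t ->
  (\sum_(x <- s) F x + \sum_(x <- t | x \notin s) F x
   = \sum_(x <- t) F x + \sum_(x <- s | x \notin t) F x)%N.
Proof.
move=> us ut; rewrite (bigID (fun x => x \in t)) [in RHS](bigID (fun x => x \in s)) /=.
by rewrite big_mem_swap //; lia.
Qed.

Lemma count_exchange s t : uniq s -> uniq t ->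
  (size s + count (fun x => x \notin s) t = size t + count (fun x => x \notin t) s)%N.
Proof. by move=> us ut; rewrite -!sum1_count -!sum1_size big_exchange. Qed.

Lemma sum_le_count s P F c : (forall x, x \in s -> P x -> F x <= c)%N ->
  (\sum_(x <- s | P x) F x <= c * count P s)%N.
Proof.
move=> le_Fc; rewrite -sum1_count big_distrr /= big_seq_cond [leqRHS]big_seq_cond.
by apply: leq_sum => x /andP [xs Px]; rewrite muln1 le_Fc.
Qed.

Lemma sum_ge_count s P F c : (forall x, x \in s -> P x -> c <= F x)%N ->
  (c * count P s <= \sum_(x <- s | P x) F x)%N.
Proof.
move=> le_cF; rewrite -sum1_count big_distrr /= big_seq_cond [leqRHS]big_seq_cond.
by apply: leq_sum => x /andP [xs Px]; rewrite muln1 le_cF.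
Qed.

Lemma sum_ge_count_tight s P F c : (forall x, x \in s -> P x -> c <= F x)%N ->
  (\sum_(x <- s | P x) F x <= c * count P s)%N ->
  forall x, x \in s -> P x -> F x = c.
Proof.
elim: s => [//|y s IHs] le_cF.
have le_cF' x : x \in s -> P x -> (c <= F x)%N.
  by move=> xs; apply: le_cF; rewrite inE xs orbT.
have ge_s := sum_ge_count le_cF'; rewrite big_cons /=.
case: (boolP (P y)) => Py /= le_ys x; rewrite inE => /orP [/eqP -> Py'|xs Px].
- by have := le_cF y (mem_head y s) Py'; lia.
- have := le_cF y (mem_head y s) Py => le_c_Fy.
  by apply: (IHs le_cF') => //; lia.
- by rewrite Py' in Py.
- exact: (IHs le_cF').
Qed.

Lemma exchange_tight s t F c m : (0 < c)%N -> uniq s -> uniq t ->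
  (forall x, x \in s -> x \notin t -> c <= F x)%N ->
  (forall x, x \in t -> x \notin s -> F x < c)%N ->
  (size t + m <= size s)%N ->
  (\sum_(x <- s) F x <= \sum_(x <- t) F x + c * m)%N ->
  [/\ {subset t <= s}, count (fun x => x \notin t) s = m,
      forall x, x \in s -> x \notin t -> F x = c
    & (\sum_(x <- s) F x = \sum_(x <- t) F x + c * m)%N].
Proof.
move=> c_gt0 us ut heavy light size_st sum_st.
have hsize := count_exchange us ut; have hsum := big_exchange F us ut.
set d := count _ s in hsize *; set e := count _ t in hsize.
have ge_d := sum_ge_count heavy; rewrite -/d in ge_d.
have le_e : (\sum_(x <- t | x \notin s) F x <= c.-1 * e)%N.
  by apply: sum_le_count => x xt xs; rewrite -ltnS prednK ?light.
have [e0 dm] : e = 0%N /\ d = m.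
  have : (c * (m + e) <= c * d)%N by rewrite leq_mul2l; lia.
  by rewrite -(prednK c_gt0) in ge_d le_e *; nia.
have sum_s : (\sum_(x <- s | x \notin t) F x <= c * count (fun x => x \notin t) s)%N.
  by rewrite -/d; move: le_e; rewrite e0; lia.
split=> //.
- move=> x xt; apply/negPn/negP => xs.
  have : (0 < e)%N by rewrite -has_count; apply/hasP; exists x.
  by rewrite e0.
- exact: sum_ge_count_tight heavy sum_s.
- by move: le_e ge_d; rewrite e0 -dm; lia.
Qed.

End Exchange.

Lemma odd_sum_count (T : eqType) (s : seq T) (P : pred T) (F : T -> nat) :
  (forall x, x \in s -> P x -> odd (F x)) ->
  odd (\sum_(x <- s | P x) F x) = odd (count P s).
Proof.
elim: s => [|y s IHs] oddF; first by rewrite big_nil.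
have oddF' x : x \in s -> P x -> odd (F x).
  by move=> xs; apply: oddF; rewrite inE xs orbT.
rewrite big_cons /=; case: ifP => Py; last by rewrite IHs.
by rewrite oddD IHs // oddF ?mem_head.
Qed.

Lemma coprime_even_add_odd (a b : nat) : coprime a b -> ~~ odd (a + b) -> odd a.
Proof.
move=> co_ab even_ab; apply/negPn/negP => even_a.
have two_a : (2 %| a)%N by rewrite dvdn2.
have two_b : (2 %| b)%N by move: even_ab; rewrite dvdn2 oddD (negPf even_a).
have : (2 %| gcdn a b)%N by rewrite dvdn_gcd two_a two_b.
by rewrite (eqP co_ab).
Qed.

Definition norm1 (x : pt) : nat := (`|x.1| + `|x.2|)%N.

Lemma sum_norm1 (s : seq pt) :
  (\sum_(x <- s) norm1 x = \sum_(x <- s) `|x.1| + \sum_(x <- s) `|x.2|)%N.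
Proof. exact: big_split. Qed.

Lemma inP2_odd_abs1 x : inP2 x -> ~~ odd (norm1 x) -> odd `|x.1|.
Proof. by case/andP => g _; apply: coprime_even_add_odd. Qed.

Lemma mem_coords (q : nat) (a : int) : (`|a| <= q)%N -> a \in coords q.
Proof. by move=> le_aq; apply/mapP; exists (absz (a + Posz q)%R); rewrite ?mem_iota; lia. Qed.

Lemma mem_ballP q x : (x \in ballP q) = inP2 x && (norm1 x <= q)%N.
Proof.
rewrite mem_filter /norm1; case: (boolP (inP2 x && _)) => // /andP [_ le_xq].
case: x le_xq => a b le_abq; rewrite /= in le_abq.
by apply: (@allpairs_f _ _ _ (fun x y => (x, y))); apply: mem_coords; lia.
Qed.

Lemma uniq_ballP q : uniq (ballP q).
Proof.
have coords_uniq : uniq (coords q).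
  by rewrite map_inj_uniq ?iota_uniq // => i j; lia.
by rewrite filter_uniq // allpairs_uniq // => -[a b] [c d] _ _ /= [-> ->].
Qed.

(* (a, b) |-> (b, a), negated when needed to land back in P^2_o. *)
Definition flip (x : pt) : pt :=
  if (x.2 < 0)%R then (- x.2, - x.1)%R else (x.2, x.1).

Lemma inP2_flip x : inP2 x -> inP2 (flip x).
Proof.
case: x => a b /andP [g h]; rewrite /= in g h; rewrite /inP2 /flip /gcdz.
case: ifP => /= b_lt0; rewrite ?abszN gcdnC g /=; first by apply/orP; left; lia.
have [b0|b_neq0] := eqVneq b 0; last by apply/orP; left; lia.
by move: h; rewrite b0 ltxx andbF orbF => ->; rewrite orbT.
Qed.

Lemma flipK x : inP2 x -> flip (flip x) = x.
Proof.
case: x => a b /andP [_ h]; rewrite /= in h; rewrite /flip /=.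
have a_ge0 : (0 <= a)%R by case/orP: h => [/ltW // | /andP [/eqP ->]].
have [b_lt0|b_ge0] := ltrP b 0 => /=.
- have a_gt0 : (0 < a)%R by case/orP: h => // /andP [_]; lia.
  by rewrite ifT ?opprK // oppr_lt0.
- by rewrite ifF //; apply/negbTE; rewrite -leNgt.
Qed.

Lemma norm1_flip x : norm1 (flip x) = norm1 x.
Proof. by rewrite /norm1 /flip; case: ifP => _ /=; rewrite ?abszN addnC. Qed.

Lemma sum_abs1_ballP q :
  (\sum_(x <- ballP q) `|x.1| = \sum_(x <- ballP q) `|x.2|)%N.
Proof.
have flip_perm : perm_eq (map flip (ballP q)) (ballP q).
  apply: uniq_perm (uniq_ballP q) _ => [|x].
    rewrite map_inj_in_uniq ?uniq_ballP // => x y.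
    by rewrite !mem_ballP => /andP [Px _] /andP [Py _] e; rewrite -(flipK Px) e flipK.
  apply/mapP/idP => [[y]|].
    by move=> + ->; rewrite !mem_ballP norm1_flip => /andP [Py ->]; rewrite inP2_flip.
  rewrite mem_ballP => /andP [Px ?]; exists (flip x); last by rewrite flipK.
  by rewrite mem_ballP inP2_flip // norm1_flip.
rewrite -(perm_big _ flip_perm) big_map; apply: eq_bigr => -[a b] _.
by rewrite /flip /=; case: ifP => _ /=; rewrite ?abszN.
Qed.

Lemma kappap_sum_abs1 q : kappap q = (\sum_(x <- ballP q) `|x.1|)%N.
Proof. by rewrite /kappap /kappa -sum_abs1_ballP maxnn. Qed.

Lemma sum_norm1_ballP q : (\sum_(x <- ballP q) norm1 x = 2 * kappap q)%N.
Proof. by rewrite sum_norm1 -sum_abs1_ballP kappap_sum_abs1 mul2n addnn. Qed.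

Lemma admissible_size_lt k p m X : (0 < p)%N -> (4 %| p)%N -> odd m ->
  k = (kappap p.-1 + m * (p %/ 2))%N -> admissible k X -> (size X < Np p.-1 + m)%N.
Proof.
move=> p_gt0 p4 m_odd def_k /andP [/andP [uX allX] kX].
have pm : (p * m = 2 * (m * (p %/ 2)))%N.
  by rewrite -{1}(divnK (dvdn_trans (isT : 2 %| 4)%N p4)); ring.
set t := ballP p.-1; have ut : uniq t := uniq_ballP p.-1.
rewrite ltnNge; apply/negP => size_X.
move: kX; rewrite /kappa geq_max => /andP [sum1_X sum2_X].
have inX x : x \in X -> inP2 x by move/allP: allX; apply.
have heavy x : x \in X -> x \notin t -> (p <= norm1 x)%N.
  by move=> /inX Px; rewrite mem_ballP Px /=; lia.
have light x : x \in t -> x \notin X -> (norm1 x < p)%N.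
  by rewrite mem_ballP => /andP [_]; lia.
have sum_X : (\sum_(x <- X) norm1 x <= \sum_(x <- t) norm1 x + p * m)%N.
  by rewrite sum_norm1_ballP sum_norm1 pm; lia.
have [sub_tX count_X norm_X eq_sum] :=
  exchange_tight p_gt0 uX ut heavy light size_X sum_X.
have sum1_Xk : (\sum_(x <- X) `|x.1| = k)%N.
  by move: eq_sum; rewrite sum_norm1_ballP sum_norm1; lia.
have sum1_new : (\sum_(x <- X | x \notin t) `|x.1| = m * (p %/ 2))%N.
  have := big_exchange (fun x : pt => `|x.1|%N) uX ut.
  rewrite [\sum_(x <- t | _) _]big1_seq => [|x /andP [xnX xt]]; last first.
    by rewrite (sub_tX x xt) in xnX.
  by rewrite sum1_Xk -kappap_sum_abs1 addn0 def_k => /addnI ->.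
have odd_new x : x \in X -> x \notin t -> odd `|x.1|.
  by move=> xX xt; apply: inP2_odd_abs1; rewrite ?inX // norm_X //; lia.
have := @odd_sum_count _ X (fun x => x \notin t) (fun x => `|x.1|%N) odd_new.
by rewrite sum1_new count_X oddM m_odd; have -> : odd (p %/ 2) = false by lia.
Qed.

Lemma delta_z2_lt k p m : (0 < p)%N -> (4 %| p)%N -> odd m ->
  k = (kappap p.-1 + m * (p %/ 2))%N -> (delta_z2 k < Np p.-1 + m)%N.
Proof.
move=> p_gt0 p4 m_odd def_k; rewrite /delta_z2.
by case: ex_maxnP => n /asboolP [X [adm_X <-]] _; apply: admissible_size_lt adm_X.
Qed.

Lemma lambda2_eq k p m : (0 < p)%N -> (2 %| p)%N ->
  (Posz k - Posz (kappap p.-1))%R = Posz (m * (p %/ 2)) ->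
  lambda2 k p = ((Posz (Np p.-1 + m))%:~R)%R.
Proof.
move=> p_gt0 p2 def_k.
rewrite /lambda2 def_k -!pmulrn -[in (p%:R)%R](divnK p2) !natrM natrD.
have half_neq0 : ((p %/ 2)%:R != 0 :> rat)%R by rewrite pnatr_eq0; lia.
by field; exact: half_neq0.
Qed.

Theorem lemma3p3 (k p : nat) :
  (0 < k)%N ->
  (0 < p)%N -> (k < kappap p)%N ->
  (forall q : nat, (0 < q)%N -> (q < p)%N -> ~~ (k < kappap q)%N) ->
  (4 %| p)%N ->
  (exists m : nat, odd m /\ (Posz k - Posz (kappap p.-1))%R = Posz (m * (p %/ 2))) ->
  Posz (delta_z2 k) <> Num.floor (lambda2 k p).
Proof.
move=> _ p_gt0 _ _ p4 [m [m_odd def_k]].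
have p2 : (2 %| p)%N by apply: dvdn_trans p4.
rewrite (lambda2_eq p_gt0 p2 def_k) intrKfloor.
have def_k' : k = (kappap p.-1 + m * (p %/ 2))%N by lia.
by have := delta_z2_lt p_gt0 p4 m_odd def_k'; lia.
Qed.
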